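(* Let $(X,d_X)$ and $(Y,d_Y)$ be metric spaces and let $d$ be a partial distance-preserving metric on $X\times Y$ with $d_\infty\le d$. Then $(X\times Y,d)$ is ultrametric if and only if for all compact sets $W\subseteq X$, $Z\subseteq Y$ and every $\varepsilon>0$ both $$\mathcal N_\varepsilon(W\times Z)=\mathcal M_\varepsilon(W\times Z)\quad\text{and}\quad \mathcal M_\varepsilon(W\times Z)=\mathcal M_\varepsilon(W)\cdot\mathcal M_\varepsilon(Z)$$ hold, where the quantities for $W$, $Z$, $W\times Z$ are computed in $(X,d_X)$, $(Y,d_Y)$, $(X\times Y,d)$ respectively.
   Context: $d_\infty((x_1,y_1),(x_2,y_2))=\max\{d_X(x_1,x_2),d_Y(y_1,y_2)\}$. A metric $d$ on $X\times Y$ is partial distance-preserving if $d((x_1,y),(x_2,y))=d_X(x_1,x_2)$ and $d((x,y_1),(x,y_2))=d_Y(y_1,y_2)$ for all $x,x_1,x_2\in X$, $y,y_1,y_2\in Y$. Ultrametric: $\rho(a,b)\le\max\{\rho(a,c),\rho(c,b)\}$. In a metric space $(M,\rho)$ with closed balls $B(c,r)=\{x:\rho(x,c)\le r\}$: $C$ is an $\varepsilon$-net for $V$ if $V\subseteq\bigcup_{c\in C}B(c,\varepsilon)$; $A$ is $\varepsilon$-distinguishable if $\rho(a,b)>\varepsilon$ for distinct $a,b\in A$. For totally bounded $V$, the covering number $\mathcal N_\varepsilon(V)$ is the smallest cardinality of a subset of $V$ that is an $\varepsilon$-net for $V$, and the packing number $\mathcal M_\varepsilon(V)$ is the maximal cardinality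 of an $\varepsilon$-distinguishable subset of $V$. *)

From Stdlib Require Import Reals List Classical ClassicalEpsilon.
Open Scope R_scope.

Definition is_metric {M : Type} (rho : M -> M -> R) : Prop :=
  (forall a b, 0 <= rho a b) /\
  (forall a b, rho a b = 0 <-> a = b) /\
  (forall a b, rho a b = rho b a) /\
  (forall a b c, rho a b <= rho a c + rho c b).

Definition ultrametric {M : Type} (rho : M -> M -> R) : Prop :=
  forall a b c, rho a b <= Rmax (rho a c) (rho c b).

Definition d_inf {X Y : Type} (dX : X -> X -> R) (dY : Y -> Y -> R)
  (p q : X * Y) : R := Rmax (dX (fst p) (fst q)) (dY (snd p) (snd q)).

Definition partial_distance_preserving {X Y : Type} (dX : X -> X -> R)
  (dY : Y -> Y -> R) (d : X * Y -> X * Y -> R) : Prop :=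
  (forall x1 x2 y, d (x1, y) (x2, y) = dX x1 x2) /\
  (forall x y1 y2, d (x, y1) (x, y2) = dY y1 y2).

Definition is_open {M : Type} (rho : M -> M -> R) (O : M -> Prop) : Prop :=
  forall x, O x -> exists r, 0 < r /\ forall y, rho x y < r -> O y.

Definition compact_set {M : Type} (rho : M -> M -> R) (W : M -> Prop) : Prop :=
  forall (I : Type) (U : I -> M -> Prop),
    (forall i, is_open rho (U i)) ->
    (forall x, W x -> exists i, U i x) ->
    exists l : list I, forall x, W x -> exists i, In i l /\ U i x.

Definition setX {X Y : Type} (W : X -> Prop) (Z : Y -> Prop) : X * Y -> Prop :=
  fun p => W (fst p) /\ Z (snd p).

Definition cball {M : Type} (rho : M -> M -> R) (c : M) (r : R) : M -> Prop :=
  fun x => rho x c <= r.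

(* C (a finite subset, given as a duplicate-free list) is an eps-net for V *)
Definition is_net {M : Type} (rho : M -> M -> R) (eps : R) (C : list M)
  (V : M -> Prop) : Prop :=
  forall v, V v -> exists c, In c C /\ cball rho c eps v.

Definition distinguishable {M : Type} (rho : M -> M -> R) (eps : R)
  (A : list M) : Prop :=
  forall a b, In a A -> In b A -> a <> b -> eps < rho a b.

Definition subset_of {M : Type} (l : list M) (V : M -> Prop) : Prop :=
  forall x, In x l -> V x.

Definition is_covering_number {M : Type} (rho : M -> M -> R) (V : M -> Prop)
  (eps : R) (n : nat) : Prop :=
  (exists C, NoDup C /\ subset_of C V /\ is_net rho eps C V /\ length C = n) /\
  (forall C, NoDup C -> subset_of C V -> is_net rho eps C V -> (n <= length C)%nat).

Definition is_packing_number {M : Type} (rho : M -> M -> R) (V : M -> Prop)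
  (eps : R) (n : nat) : Prop :=
  (exists A, NoDup A /\ subset_of A V /\ distinguishable rho eps A /\ length A = n) /\
  (forall A, NoDup A -> subset_of A V -> distinguishable rho eps A -> (length A <= n)%nat).

(* The numbers themselves (well-defined for totally bounded V, in particular
   compact V; an arbitrary value otherwise). *)
Definition covering_number {M : Type} (rho : M -> M -> R) (V : M -> Prop)
  (eps : R) : nat :=
  epsilon (inhabits 0%nat) (fun n => is_covering_number rho V eps n).

Definition packing_number {M : Type} (rho : M -> M -> R) (V : M -> Prop)
  (eps : R) : nat :=
  epsilon (inhabits 0%nat) (fun n => is_packing_number rho V eps n).

From Stdlib Require Import Reals List Classical ClassicalEpsilon Lra Lia Arith.
Open Scope R_scope.

(* The key notion is a separated net of V: a duplicate-free eps-net of V made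
   of points of V that is at the same time eps-distinguishable.  In an
   ultrametric space two points of one closed eps-ball are within eps of each
   other, so a separated net has exactly N_eps(V) = M_eps(V) elements
   ([separated_net_numbers]); a compact V admits one (greedy selection from a
   finite cover by balls, [compact_separated_net]).

   (=>) If d is ultrametric then d = d_inf and d_X, d_Y are ultrametric.  The
   product of separated nets of W and Z is a separated net of W x Z, which
   gives both identities.

   (<=) Testing the identities on finite sets (which are compact):
   equality N = M on three points of a fibre X x {y} (resp. {x} x Y) forces
   the ultrametric inequality for d_X (resp. d_Y); multiplicativity of M on
   {x1,x2} x {y1,y2} forces d <= d_inf.  Hence d = d_inf, which is
   ultrametric as a maximum of ultrametrics. *)

Lemma length_le_of_rel_injective {A B : Type} (rel : A -> B -> Prop)
  (la : list A) : forall lb : list B,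
  NoDup la ->
  (forall a, In a la -> exists b, In b lb /\ rel a b) ->
  (forall a a' b, In a la -> In a' la -> rel a b -> rel a' b -> a = a') ->
  (length la <= length lb)%nat.
Proof.
  induction la as [|a la IH]; intros lb Hnd Hrel Hinj; simpl; [lia|].
  apply NoDup_cons_iff in Hnd as [Ha_notin Hnd].
  destruct (Hrel a (or_introl eq_refl)) as [b [Hb Hab]].
  destruct (in_split b lb Hb) as [l1 [l2 ->]].
  assert (Hrest : (length la <= length (l1 ++ l2))%nat).
  { apply IH; [exact Hnd| |].
    - intros a' Ha'. destruct (Hrel a' (or_intror Ha')) as [b' [Hb' Hab']].
      exists b'; split; [|exact Hab'].
      apply in_app_or in Hb' as [Hb'|[<-|Hb']]; try (apply in_or_app; tauto).
      (* [b] itself is already used by [a] *)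
      exfalso; apply Ha_notin.
      rewrite (Hinj a a' b (or_introl eq_refl) (or_intror Ha') Hab Hab').
      exact Ha'.
    - intros x x' y Hx Hx'. apply Hinj; right; assumption. }
  rewrite length_app in *; simpl; lia.
Qed.

Lemma nat_bounded_max (P : nat -> Prop) (B : nat) :
  (exists n, P n) -> (forall n, P n -> (n <= B)%nat) ->
  exists n, P n /\ forall m, P m -> (m <= n)%nat.
Proof.
  induction B as [|B IH]; intros Hex Hbound.
  - destruct Hex as [n Hn]. exists n; split; [exact Hn|].
    intros m Hm. specialize (Hbound m Hm). lia.
  - destruct (classic (P (S B))) as [HS|HnS].
    + exists (S B); split; [exact HS|exact Hbound].
    + apply IH; [exact Hex|]. intros n Hn.
      destruct (Nat.eq_dec n (S B)) as [->|Hne]; [contradiction|].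
      specialize (Hbound n Hn). lia.
Qed.

Section Numbers.

Context {M : Type} (rho : M -> M -> R).

Lemma is_covering_number_unique (V : M -> Prop) (eps : R) (n n' : nat) :
  is_covering_number rho V eps n -> is_covering_number rho V eps n' -> n = n'.
Proof.
  intros [[C [H1 [H2 [H3 <-]]]] Hmin] [[C' [H1' [H2' [H3' <-]]]] Hmin'].
  apply Nat.le_antisymm; [apply Hmin|apply Hmin']; assumption.
Qed.

Lemma is_packing_number_unique (V : M -> Prop) (eps : R) (n n' : nat) :
  is_packing_number rho V eps n -> is_packing_number rho V eps n' -> n = n'.
Proof.
  intros [[A [H1 [H2 [H3 <-]]]] Hmax] [[A' [H1' [H2' [H3' <-]]]] Hmax'].
  apply Nat.le_antisymm; [apply Hmax'|apply Hmax]; assumption.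
Qed.

Lemma covering_number_eq (V : M -> Prop) (eps : R) (n : nat) :
  is_covering_number rho V eps n -> covering_number rho V eps = n.
Proof.
  intros Hn. apply (is_covering_number_unique V eps); [|exact Hn].
  unfold covering_number; apply epsilon_spec. exists n; exact Hn.
Qed.

Lemma packing_number_eq (V : M -> Prop) (eps : R) (n : nat) :
  is_packing_number rho V eps n -> packing_number rho V eps = n.
Proof.
  intros Hn. apply (is_packing_number_unique V eps); [|exact Hn].
  unfold packing_number; apply epsilon_spec. exists n; exact Hn.
Qed.

Lemma covering_number_spec (V : M -> Prop) (eps : R) :
  (exists C, NoDup C /\ subset_of C V /\ is_net rho eps C V) ->
  is_covering_number rho V eps (covering_number rho V eps).
Proof.
  intros [C HC]. unfold covering_number; apply epsilon_spec.
  set (P := fun n => exists C, NoDup C /\ subset_of C V /\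
                       is_net rho eps C V /\ length C = n).
  destruct (dec_inh_nat_subset_has_unique_least_element P)
    as [n [[Hn Hleast] _]].
  - intro n; apply classic.
  - exists (length C), C. tauto.
  - exists n; split; [exact Hn|].
    intros C' H1 H2 H3. apply Hleast. exists C'. tauto.
Qed.

Lemma packing_number_spec (V : M -> Prop) (eps : R) (L : list M) :
  (forall x, V x -> In x L) ->
  is_packing_number rho V eps (packing_number rho V eps).
Proof.
  intros HL. unfold packing_number; apply epsilon_spec.
  destruct (nat_bounded_max (fun n => exists A, NoDup A /\ subset_of A V /\
              distinguishable rho eps A /\ length A = n) (length L))
    as [n [Hn Hmax]].
  - exists 0%nat, nil.
    split; [constructor|split; [intros x []|split; [intros a b []|reflexivity]]].
  - intros n [A [HA [HAV [_ <-]]]]. apply NoDup_incl_length; [exact HA|].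
    intros x Hx; exact (HL x (HAV x Hx)).
  - exists n; split; [exact Hn|].
    intros A H1 H2 H3. apply Hmax. exists A. tauto.
Qed.

Lemma covering_number_le_net (V : M -> Prop) (eps : R) (C : list M) :
  NoDup C -> subset_of C V -> is_net rho eps C V ->
  (covering_number rho V eps <= length C)%nat.
Proof.
  intros H1 H2 H3.
  exact (proj2 (covering_number_spec V eps (ex_intro _ C (conj H1 (conj H2 H3))))
           C H1 H2 H3).
Qed.

Lemma packing_number_ge (V : M -> Prop) (eps : R) (L A : list M) :
  (forall x, V x -> In x L) ->
  NoDup A -> subset_of A V -> distinguishable rho eps A ->
  (length A <= packing_number rho V eps)%nat.
Proof. intros HL. exact (proj2 (packing_number_spec V eps L HL) A). Qed.

Lemma packing_number_le (V : M -> Prop) (eps : R) (L : list M) (n : nat) :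
  (forall x, V x -> In x L) ->
  (forall A, NoDup A -> subset_of A V -> distinguishable rho eps A ->
     (length A <= n)%nat) ->
  (packing_number rho V eps <= n)%nat.
Proof.
  intros HL Hbound.
  destruct (packing_number_spec V eps L HL) as [[A [H1 [H2 [H3 <-]]]] _].
  exact (Hbound A H1 H2 H3).
Qed.

Lemma numbers_of_empty (V : M -> Prop) (eps : R) :
  (forall x, ~ V x) ->
  covering_number rho V eps = 0%nat /\ packing_number rho V eps = 0%nat.
Proof.
  intros HV. split.
  - apply covering_number_eq. split; [|intros; lia].
    exists nil. split; [constructor|split; [intros x []|split; [|reflexivity]]].
    intros v Hv; exfalso; exact (HV v Hv).
  - apply Nat.le_0_r, (packing_number_le V eps nil).
    + intros x Hx; exfalso; exact (HV x Hx).
    + intros [|a A] _ HAV _; simpl; [lia|].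
      exfalso; exact (HV a (HAV a (or_introl eq_refl))).
Qed.

Lemma packing_number_pair_le (V : M -> Prop) (a b : M) (eps : R) :
  (forall u v, rho u v = rho v u) ->
  (forall x, V x -> x = a \/ x = b) -> rho a b <= eps ->
  (packing_number rho V eps <= 1)%nat.
Proof.
  intros Hsym HV Hab. apply (packing_number_le V eps (a :: b :: nil)).
  { intros x Hx; destruct (HV x Hx) as [-> | ->]; simpl; tauto. }
  intros [|u [|v A]] Hnd HAV Hdis; simpl; try lia. exfalso.
  assert (Huv : u <> v) by (intros ->; inversion Hnd; simpl in *; tauto).
  assert (Hfar := Hdis u v (or_introl eq_refl) (or_intror (or_introl eq_refl)) Huv).
  destruct (HV u (HAV u (or_introl eq_refl))) as [-> | ->];
    destruct (HV v (HAV v (or_intror (or_introl eq_refl)))) as [-> | ->];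
    try contradiction; [|rewrite Hsym in Hfar]; lra.
Qed.

(* Equality of covering and packing numbers of a three-point set at every
   scale forces the ultrametric inequality on these points: otherwise, at
   scale m = max(rho a c, rho c b), the centre c covers everything while a
   and b are m-distinguishable. *)
Lemma ultrametric_triple_of_numbers (V : M -> Prop) (a b c : M) :
  is_metric rho ->
  (forall p, V p <-> p = a \/ p = b \/ p = c) ->
  (forall eps, 0 < eps -> covering_number rho V eps = packing_number rho V eps) ->
  rho a b <= Rmax (rho a c) (rho c b).
Proof.
  intros [Hpos [Hzero [Hsym _]]] HV Hnum.
  set (m := Rmax (rho a c) (rho c b)).
  assert (Hac : rho a c <= m) by apply Rmax_l.
  assert (Hcb : rho c b <= m) by apply Rmax_r.
  destruct (Rle_dec (rho a b) m) as [|Hgt]; [assumption|exfalso].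
  apply Rnot_le_lt in Hgt.
  assert (Hself : forall x, rho x x = 0) by (intro x; apply Hzero; reflexivity).
  assert (Hab : a <> b).
  { intros <-. rewrite Hself in Hgt. pose proof (Hpos a c). lra. }
  assert (Hm : 0 < m).
  { destruct (Rle_lt_dec m 0) as [Hle|]; [exfalso|assumption].
    pose proof (Hpos a c); pose proof (Hpos c b).
    apply Hab. transitivity c; apply Hzero; lra. }
  assert (HL : forall x, V x -> In x (a :: b :: c :: nil))
    by (intros x Hx; apply HV in Hx; simpl; intuition).
  assert (Hcov : (covering_number rho V m <= 1)%nat).
  { apply (covering_number_le_net V m (c :: nil)).
    - constructor; [intros []|constructor].
    - intros x [<-|[]]. apply HV; intuition.
    - intros v Hv. exists c; split; [left; reflexivity|]. unfold cball.
      apply HV in Hv as [-> |[-> | ->]]; [lra|rewrite Hsym; lra|rewrite Hself; lra]. }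
  assert (Hpack : (2 <= packing_number rho V m)%nat).
  { apply (packing_number_ge V m _ (a :: b :: nil) HL).
    - constructor; [simpl; intuition|constructor; [intros []|constructor]].
    - intros x [<-|[<-|[]]]; apply HV; intuition.
    - intros u v [<-|[<-|[]]] [<-|[<-|[]]] Huv; try contradiction;
        [|rewrite Hsym]; lra. }
  rewrite (Hnum m Hm) in Hcov. lia.
Qed.

Lemma list_compact (L : list M) : compact_set rho (fun x => In x L).
Proof.
  intros I U _ Hcov. induction L as [|a L IH].
  - exists nil. intros x [].
  - destruct (Hcov a (or_introl eq_refl)) as [i Hi].
    destruct IH as [l Hl]; [intros x Hx; apply Hcov; right; exact Hx|].
    exists (i :: l). intros x [<-|Hx].
    + exists i; split; [left; reflexivity|exact Hi].
    + destruct (Hl x Hx) as [j [Hj Uj]]. exists j; split; [right|]; assumption.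
Qed.

Definition separated_net (eps : R) (S : list M) (V : M -> Prop) : Prop :=
  NoDup S /\ subset_of S V /\ distinguishable rho eps S /\ is_net rho eps S V.

Lemma ultrametric_cball_diameter (eps : R) (a b c : M) :
  (forall u v, rho u v = rho v u) -> ultrametric rho ->
  rho a c <= eps -> rho b c <= eps -> rho a b <= eps.
Proof.
  intros Hsym Hu Hac Hbc. eapply Rle_trans; [apply (Hu a b c)|].
  rewrite (Hsym c b). apply Rmax_lub; assumption.
Qed.

(* In an ultrametric space the size of a separated net is both the covering
   and the packing number: every net point, resp. every point of a
   distinguishable set, lies in a ball around a distinct net point. *)
Lemma separated_net_numbers (eps : R) (S : list M) (V : M -> Prop) :
  (forall u v, rho u v = rho v u) -> ultrametric rho ->
  separated_net eps S V ->
  covering_number rho V eps = length S /\ packing_number rho V eps = length S.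
Proof.
  intros Hsym Hu [Hnd [Hsub [Hdis Hnet]]].
  assert (Hinj : forall A, distinguishable rho eps A ->
            forall a a' c, In a A -> In a' A ->
            rho a c <= eps -> rho a' c <= eps -> a = a').
  { intros A HA a a' c Ha Ha' Hac Ha'c. apply NNPP; intro Hne.
    pose proof (HA a a' Ha Ha' Hne).
    pose proof (ultrametric_cball_diameter eps a a' c Hsym Hu Hac Ha'c). lra. }
  split.
  - apply covering_number_eq. split; [exists S; tauto|].
    intros C HC HCV HCnet.
    apply (length_le_of_rel_injective (fun s c => rho s c <= eps)); [exact Hnd| |].
    + intros s Hs. exact (HCnet s (Hsub s Hs)).
    + intros s s' c Hs Hs'. exact (Hinj S Hdis s s' c Hs Hs').
  - apply packing_number_eq. split; [exists S; tauto|].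
    intros A HA HAV HAdis.
    apply (length_le_of_rel_injective (fun a s => rho a s <= eps)); [exact HA| |].
    + intros a Ha. exact (Hnet a (HAV a Ha)).
    + intros a a' s Ha Ha'. exact (Hinj A HAdis a a' s Ha Ha').
Qed.

Lemma greedy_separated_sublist (V : M -> Prop) (eps : R) (L : list M) :
  (forall u v, rho u v = rho v u) -> (forall x, rho x x = 0) -> 0 <= eps ->
  exists S, NoDup S /\ subset_of S V /\ distinguishable rho eps S /\
    forall l, In l L -> V l -> exists s, In s S /\ rho l s <= eps.
Proof.
  intros Hsym Hself Heps. induction L as [|x L IH].
  - exists nil. split; [constructor|split; [intros y []|split; [intros a b []|]]].
    intros l [].
  - destruct IH as [S [Hnd [Hsub [Hdis Hnear]]]].
    destruct (classic (V x /\ ~ exists s, In s S /\ rho x s <= eps))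
      as [[Vx Hfar]|Hcovered].
    +
      exists (x :: S). split; [|split; [|split]].
      * constructor; [|exact Hnd]. intro Hin. apply Hfar.
        exists x; split; [exact Hin|rewrite Hself; exact Heps].
      * intros y [<-|Hy]; [exact Vx|exact (Hsub y Hy)].
      * intros a b [<-|Ha] [<-|Hb] Hab; [contradiction| | |exact (Hdis a b Ha Hb Hab)];
          apply Rnot_le_lt; intro Hle; apply Hfar; eauto.
        rewrite Hsym in Hle; eauto.
      * intros l [<-|Hl] Vl.
        -- exists x; split; [left; reflexivity|rewrite Hself; exact Heps].
        -- destruct (Hnear l Hl Vl) as [s [Hs Hls]]. exists s; split; [right|]; assumption.
    + exists S. split; [exact Hnd|split; [exact Hsub|split; [exact Hdis|]]].
      intros l [<-|Hl] Vl; [|exact (Hnear l Hl Vl)].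
      apply NNPP; intro Hn. apply Hcovered. split; assumption.
Qed.

(* A compact subset of an ultrametric space has a separated eps-net: select
   greedily among the centres of a finite cover by open eps-balls. *)
Lemma compact_separated_net (V : M -> Prop) (eps : R) :
  is_metric rho -> ultrametric rho -> compact_set rho V -> 0 < eps ->
  exists S, separated_net eps S V.
Proof.
  intros [Hpos [Hzero [Hsym Htri]]] Hu Hcomp Heps.
  assert (Hself : forall x, rho x x = 0) by (intro x; apply Hzero; reflexivity).
  destruct (Hcomp M (fun x y => V x /\ rho x y < eps)) as [L HL].
  - intros x y [Vx Hxy]. exists (eps - rho x y). split; [lra|].
    intros z Hz. split; [exact Vx|]. pose proof (Htri x z y). lra.
  - intros x Vx. exists x. split; [exact Vx|rewrite Hself; exact Heps].
  - destruct (greedy_separated_sublist V eps L Hsym Hself (Rlt_le _ _ Heps))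
      as [S [Hnd [Hsub [Hdis Hnear]]]].
    exists S. split; [exact Hnd|split; [exact Hsub|split; [exact Hdis|]]].
    intros v Vv. destruct (HL v Vv) as [l [Hl [Vl Hlv]]].
    destruct (Hnear l Hl Vl) as [s [Hs Hls]]. exists s; split; [exact Hs|].
    unfold cball. eapply Rle_trans; [apply (Hu v s l)|].
    apply Rmax_lub; [rewrite Hsym; lra|exact Hls].
Qed.

End Numbers.

Section Product.

Context {X Y : Type} (dX : X -> X -> R) (dY : Y -> Y -> R).

Lemma NoDup_list_prod (l : list X) (l' : list Y) :
  NoDup l -> NoDup l' -> NoDup (list_prod l l').
Proof.
  intros H H'; induction H as [|a l Hna Hl IH]; simpl; [constructor|].
  apply NoDup_app; [|exact IH|].
  - apply NoDup_map_NoDup_ForallPairs; [|exact H'].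
    intros x y _ _ E; injection E; auto.
  - intros p Hp1 Hp2. apply in_map_iff in Hp1 as [y [<- _]].
    apply in_prod_iff in Hp2. tauto.
Qed.

Lemma d_inf_ultrametric :
  ultrametric dX -> ultrametric dY -> ultrametric (d_inf dX dY).
Proof.
  intros HuX HuY [a1 a2] [b1 b2] [c1 c2]. unfold d_inf; simpl.
  pose proof (HuX a1 b1 c1). pose proof (HuY a2 b2 c2).
  unfold Rmax in *; repeat destruct Rle_dec; lra.
Qed.

Lemma product_separated_net (d : X * Y -> X * Y -> R) (eps : R)
  (W : X -> Prop) (Z : Y -> Prop) (SW : list X) (SZ : list Y) :
  (forall p q, d p q = d_inf dX dY p q) ->
  separated_net dX eps SW W -> separated_net dY eps SZ Z ->
  separated_net d eps (list_prod SW SZ) (setX W Z).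
Proof.
  intros Hd [W1 [W2 [W3 W4]]] [Z1 [Z2 [Z3 Z4]]].
  split; [|split; [|split]].
  - exact (NoDup_list_prod SW SZ W1 Z1).
  - intros [a b] Hab. apply in_prod_iff in Hab as [Ha Hb].
    split; [exact (W2 a Ha)|exact (Z2 b Hb)].
  - intros [a1 b1] [a2 b2] H1 H2 Hne.
    apply in_prod_iff in H1, H2. rewrite Hd. unfold d_inf; simpl.
    destruct (classic (a1 = a2)) as [<-|Hna].
    + assert (b1 <> b2) by (intros <-; apply Hne; reflexivity).
      eapply Rlt_le_trans; [apply (Z3 b1 b2); tauto|apply Rmax_r].
    + eapply Rlt_le_trans; [apply (W3 a1 a2); tauto|apply Rmax_l].
  - intros [w z] [Hw Hz]; simpl in Hw, Hz.
    destruct (W4 w Hw) as [sw [Hsw Hw']]. destruct (Z4 z Hz) as [sz [Hsz Hz']].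
    exists (sw, sz). split; [apply in_prod; assumption|].
    unfold cball in *. rewrite Hd. unfold d_inf; simpl. apply Rmax_lub; assumption.
Qed.

Variables (d : X * Y -> X * Y -> R).
Hypothesis hpd : partial_distance_preserving dX dY d.
Hypothesis hinf : forall p q, d_inf dX dY p q <= d p q.

Definition product_numbers_property : Prop :=
  forall (W : X -> Prop) (Z : Y -> Prop) (eps : R),
    compact_set dX W -> compact_set dY Z -> 0 < eps ->
    covering_number d (setX W Z) eps = packing_number d (setX W Z) eps /\
    packing_number d (setX W Z) eps =
      (packing_number dX W eps * packing_number dY Z eps)%nat.

(* If d is ultrametric it is the sup metric: pass through (x2, y1). *)
Lemma ultrametric_is_d_inf :
  ultrametric d -> forall p q, d p q = d_inf dX dY p q.
Proof.
  intros Hu [x1 y1] [x2 y2]. apply Rle_antisym; [|apply hinf].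
  pose proof (Hu (x1, y1) (x2, y2) (x2, y1)) as H.
  rewrite (proj1 hpd), (proj2 hpd) in H. exact H.
Qed.

Lemma ultrametric_fst : ultrametric d -> Y -> ultrametric dX.
Proof.
  intros Hu y a b c.
  rewrite <- (proj1 hpd a b y), <- (proj1 hpd a c y), <- (proj1 hpd c b y).
  apply Hu.
Qed.

Lemma ultrametric_snd : ultrametric d -> X -> ultrametric dY.
Proof.
  intros Hu x a b c.
  rewrite <- (proj2 hpd x a b), <- (proj2 hpd x a c), <- (proj2 hpd x c b).
  apply Hu.
Qed.

Hypotheses (hX : is_metric dX) (hY : is_metric dY) (hd : is_metric d).

(* Forward implication: separated nets of W and Z multiply to one of W x Z. *)
Lemma product_numbers_of_ultrametric :
  ultrametric d -> product_numbers_property.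
Proof.
  intros Hu W Z eps HW HZ Heps.
  destruct (classic (exists z, Z z)) as [[z0 Hz0]|HZe].
  2:{ destruct (numbers_of_empty d (setX W Z) eps) as [-> ->];
        [intros p [_ Hp]; eauto|].
      rewrite (proj2 (numbers_of_empty dY Z eps (fun z Hz => HZe (ex_intro _ z Hz)))).
      rewrite Nat.mul_0_r. split; reflexivity. }
  destruct (classic (exists w, W w)) as [[w0 Hw0]|HWe].
  2:{ destruct (numbers_of_empty d (setX W Z) eps) as [-> ->];
        [intros p [Hp _]; eauto|].
      rewrite (proj2 (numbers_of_empty dX W eps (fun w Hw => HWe (ex_intro _ w Hw)))).
      split; reflexivity. }
  pose proof (ultrametric_fst Hu z0) as HuX. pose proof (ultrametric_snd Hu w0) as HuY.
  destruct (compact_separated_net dX W eps hX HuX HW Heps) as [SW HSW].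
  destruct (compact_separated_net dY Z eps hY HuY HZ Heps) as [SZ HSZ].
  pose proof (product_separated_net d eps W Z SW SZ (ultrametric_is_d_inf Hu) HSW HSZ)
    as HS.
  destruct hX as [_ [_ [HsX _]]]; destruct hY as [_ [_ [HsY _]]];
    destruct hd as [_ [_ [Hs _]]].
  destruct (separated_net_numbers d eps _ _ Hs Hu HS) as [-> ->].
  rewrite (proj2 (separated_net_numbers dX eps _ _ HsX HuX HSW)),
          (proj2 (separated_net_numbers dY eps _ _ HsY HuY HSZ)), length_prod.
  split; reflexivity.
Qed.

Lemma ultrametric_fst_of_numbers : product_numbers_property -> Y -> ultrametric dX.
Proof.
  intros Hprop y a b c.
  rewrite <- (proj1 hpd a b y), <- (proj1 hpd a c y), <- (proj1 hpd c b y).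
  apply (ultrametric_triple_of_numbers d
           (setX (fun x => In x (a :: b :: c :: nil)) (fun y' => In y' (y :: nil))));
    [exact hd| |].
  - intros [x y']; unfold setX; simpl; split.
    + intros [Hx [<-|[]]]. intuition congruence.
    + intros [E|[E|E]]; injection E as -> ->; intuition.
  - intros eps Heps. exact (proj1 (Hprop _ _ eps (list_compact _ _) (list_compact _ _) Heps)).
Qed.

Lemma ultrametric_snd_of_numbers : product_numbers_property -> X -> ultrametric dY.
Proof.
  intros Hprop x a b c.
  rewrite <- (proj2 hpd x a b), <- (proj2 hpd x a c), <- (proj2 hpd x c b).
  apply (ultrametric_triple_of_numbers d
           (setX (fun x' => In x' (x :: nil)) (fun y => In y (a :: b :: c :: nil))));
    [exact hd| |].
  - intros [x' y]; unfold setX; simpl; split.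
    + intros [[<-|[]] Hy]. intuition congruence.
    + intros [E|[E|E]]; injection E as -> ->; intuition.
  - intros eps Heps. exact (proj1 (Hprop _ _ eps (list_compact _ _) (list_compact _ _) Heps)).
Qed.

(* Converse, d <= d_inf: on {x1,x2} x {y1,y2} at scale m = d_inf(p,q) both
   factors have packing number 1, so p and q cannot be m-distinguishable. *)
Lemma le_d_inf_of_numbers :
  product_numbers_property -> forall p q, d p q <= d_inf dX dY p q.
Proof.
  intros Hprop [x1 y1] [x2 y2]. unfold d_inf; simpl.
  destruct hX as [HposX [HzX [HsX _]]]; destruct hY as [HposY [HzY [HsY _]]];
    destruct hd as [_ [Hz [Hs _]]].
  set (m := Rmax (dX x1 x2) (dY y1 y2)).
  destruct (Rle_dec (d (x1, y1) (x2, y2)) m) as [|Hgt]; [assumption|exfalso].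
  apply Rnot_le_lt in Hgt.
  assert (HmX : dX x1 x2 <= m) by apply Rmax_l.
  assert (HmY : dY y1 y2 <= m) by apply Rmax_r.
  pose proof (HposX x1 x2); pose proof (HposY y1 y2).
  assert (Hne : (x1, y1) <> (x2, y2)).
  { intro E. rewrite E, (proj2 (Hz _ _) eq_refl) in Hgt. lra. }
  assert (Hm : 0 < m).
  { destruct (Rle_lt_dec m 0) as [Hle|]; [exfalso|assumption].
    apply Hne. f_equal; [apply HzX|apply HzY]; lra. }
  set (W := fun x => In x (x1 :: x2 :: nil)). set (Z := fun y => In y (y1 :: y2 :: nil)).
  destruct (Hprop W Z m (list_compact _ _) (list_compact _ _) Hm) as [_ Hmul].
  assert (HW : (packing_number dX W m <= 1)%nat).
  { apply (packing_number_pair_le dX W x1 x2 m HsX); [|exact HmX].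
    intros x [<-|[<-|[]]]; tauto. }
  assert (HZ : (packing_number dY Z m <= 1)%nat).
  { apply (packing_number_pair_le dY Z y1 y2 m HsY); [|exact HmY].
    intros y [<-|[<-|[]]]; tauto. }
  assert (HWZ : (2 <= packing_number d (setX W Z) m)%nat).
  { apply (packing_number_ge d (setX W Z) m (list_prod (x1 :: x2 :: nil) (y1 :: y2 :: nil))
             ((x1, y1) :: (x2, y2) :: nil)).
    - intros [a b] [Ha Hb]. apply in_prod; assumption.
    - constructor; [intros [E|[]]; exact (Hne (eq_sym E))|constructor; [intros []|constructor]].
    - intros p [<-|[<-|[]]]; unfold setX, W, Z; simpl; tauto.
    - intros a b [<-|[<-|[]]] [<-|[<-|[]]] Hab; try contradiction; [|rewrite Hs]; lra. }
  rewrite Hmul in HWZ. nia.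
Qed.

Lemma ultrametric_of_product_numbers :
  product_numbers_property -> ultrametric d.
Proof.
  intros Hprop p q r.
  assert (Hd : forall p q, d p q = d_inf dX dY p q)
    by (intros; apply Rle_antisym; [apply le_d_inf_of_numbers, Hprop|apply hinf]).
  rewrite !Hd. apply d_inf_ultrametric.
  - exact (ultrametric_fst_of_numbers Hprop (snd p)).
  - exact (ultrametric_snd_of_numbers Hprop (fst p)).
Qed.

End Product.

Theorem proposition4p4 (X Y : Type) (dX : X -> X -> R) (dY : Y -> Y -> R)
  (d : X * Y -> X * Y -> R)
  (hX : is_metric dX) (hY : is_metric dY) (hd : is_metric d)
  (hpd : partial_distance_preserving dX dY d)
  (hinf : forall p q, d_inf dX dY p q <= d p q) :
  ultrametric d <->
  (forall (W : X -> Prop) (Z : Y -> Prop) (eps : R),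
     compact_set dX W -> compact_set dY Z -> 0 < eps ->
     covering_number d (setX W Z) eps = packing_number d (setX W Z) eps /\
     packing_number d (setX W Z) eps =
       (packing_number dX W eps * packing_number dY Z eps)%nat).
Proof.
  split.
  - exact (product_numbers_of_ultrametric dX dY d hpd hinf hX hY hd).
  - exact (ultrametric_of_product_numbers dX dY d hpd hinf hX hY hd).
Qed.
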